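(* Let $\Gamma\le E(n)$ be discrete, and let $(G,V)$ be a finite index cocompact translation pair of $\Gamma$ such that $G$ is abelian and $V$ is a linear subspace. Let $k=\dim\Gamma$ and suppose $k<n-2$. Then there exist half-lines $L_1,L_2\subset V^\perp$ starting from $0$ such that the following holds: if $\sigma'$ is a path from $L_1$ to $GL_2=\bigcup_{\gamma\in G}\gamma(L_2)$ and $s=\inf_t d(V,\sigma'(t))>0$, then $\operatorname{len}(\sigma')\ge\sqrt2\,s$.
   Context: $E(n)$ is the isometry group of $\mathbb{R}^n$ (maps $x\mapsto Bx+b$, $B\in O(n)$) with the topology of $O(n)\times\mathbb{R}^n$. For a discrete $\Gamma\le E(n)$, a subgroup $G\le\Gamma$ and an affine subspace $V$, $(G,V)$ is a cocompact translation pair of $\Gamma$ if $gV=V$ and $g|_V$ is a translation of $V$ for all $g\in G$, and $V/G$ is compact; it is a finite index cocompact translation pair if moreover $[\Gamma:G]<\infty$. $\dim\Gamma:=\dim V$ for any such pair (independent of choice). $V^\perp$ is the linear orthogonal complement of $V$, and $\operatorname{len}$ denotes Euclidean length of a path. *)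

From mathcomp Require Import ssreflect ssrfun ssrbool eqtype ssrnat seq fintype bigop.
From Stdlib Require Import Reals.
Set Implicit Arguments. Unset Strict Implicit.
Open Scope R_scope.

Definition vec (n : nat) := 'I_n -> R.
Definition vzero {n} : vec n := fun _ => 0.
Definition vadd {n} (x y : vec n) : vec n := fun i => x i + y i.
Definition vsub {n} (x y : vec n) : vec n := fun i => x i - y i.
Definition vscale {n} (c : R) (x : vec n) : vec n := fun i => c * x i.
Definition dot {n} (x y : vec n) : R := \big[Rplus/0]_(i < n) (x i * y i).
Definition vnorm {n} (x : vec n) : R := sqrt (dot x x).
Definition vdist {n} (x y : vec n) : R := vnorm (vsub x y).

Definition is_glb (E : R -> Prop) (m : R) : Prop :=
  (forall x, E x -> m <= x) /\ (forall b, (forall x, E x -> b <= x) -> b <= m).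

Definition orthogonal {n} (B : 'I_n -> 'I_n -> R) : Prop :=
  forall i j, \big[Rplus/0]_(k < n) (B k i * B k j) = if i == j then 1 else 0.

Definition is_isometry {n} (f : vec n -> vec n) : Prop :=
  exists (B : 'I_n -> 'I_n -> R) (b : vec n), orthogonal B /\
    forall x, f x = (fun i => \big[Rplus/0]_(j < n) (B i j * x j) + b i).

Definition ebasis {n} (j : 'I_n) : vec n := fun i => if i == j then 1 else 0.
Definition lin_part {n} (f : vec n -> vec n) (i j : 'I_n) : R :=
  f (ebasis j) i - f vzero i.
Definition trans_part {n} (f : vec n -> vec n) : vec n := f vzero.

Definition is_subgroup_En {n} (H : (vec n -> vec n) -> Prop) : Prop :=
  (forall g, H g -> is_isometry g) /\
  H (fun x => x) /\
  (forall g h, H g -> H h -> H (fun x => g (h x))) /\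
  (forall g, H g -> exists h, H h /\ (forall x, h (g x) = x) /\ (forall x, g (h x) = x)).

(* discreteness for the topology of O(n) x R^n (every point is isolated) *)
Definition discrete_En {n} (H : (vec n -> vec n) -> Prop) : Prop :=
  forall g, H g -> exists eps, 0 < eps /\
    forall h, H h ->
      (forall i j, Rabs (lin_part h i j - lin_part g i j) < eps) ->
      (forall i, Rabs (trans_part h i - trans_part g i) < eps) ->
      h = g.

Definition subgroup_of {n} (G H : (vec n -> vec n) -> Prop) : Prop :=
  is_subgroup_En G /\ forall g, G g -> H g.

(* [H : G] < infinity : finitely many right cosets G r cover H *)
Definition finite_index {n} (G H : (vec n -> vec n) -> Prop) : Prop :=
  exists reps : list (vec n -> vec n),
    (forall r, List.In r reps -> H r) /\
    forall h, H h -> exists r g, List.In r reps /\ G g /\ h = (fun x => g (r x)).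

Definition abelian {n} (G : (vec n -> vec n) -> Prop) : Prop :=
  forall g h, G g -> G h -> forall x, g (h x) = h (g x).

Definition linear_subspace {n} (V : vec n -> Prop) : Prop :=
  V vzero /\ (forall x y, V x -> V y -> V (vadd x y)) /\
  (forall c x, V x -> V (vscale c x)).

(* V has dimension k : it has an orthonormal basis with k elements *)
Definition has_dim {n} (V : vec n -> Prop) (k : nat) : Prop :=
  exists u : 'I_k -> vec n,
    (forall a b, dot (u a) (u b) = if a == b then 1 else 0) /\
    forall x, V x <-> exists c : 'I_k -> R,
      x = (fun i => \big[Rplus/0]_(a < k) (c a * u a i)).

Definition orth_compl {n} (V : vec n -> Prop) : vec n -> Prop :=
  fun x => forall v, V v -> dot x v = 0.

Definition cocompact_translation_pair {n}
    (G : (vec n -> vec n) -> Prop) (V : vec n -> Prop) : Prop :=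
  (forall g, G g ->
     (forall x, V x -> V (g x)) /\ (forall y, V y -> exists x, V x /\ g x = y) /\
     (exists t : vec n, forall x, V x -> g x = vadd x t)) /\
  (* V/G compact: a compact subset (closed ball of V) meets every G-orbit in V *)
  (exists Rad, forall x, V x -> exists g y, G g /\ V y /\ vnorm y <= Rad /\ g y = x).

Definition half_line {n} (u : vec n) : vec n -> Prop :=
  fun x => exists t, 0 <= t /\ x = vscale t u.

Definition dist_to_set_is {n} (V : vec n -> Prop) (x : vec n) (d : R) : Prop :=
  is_glb (fun r => exists v, V v /\ r = vdist v x) d.

Definition continuous_path {n} (p : R -> vec n) : Prop :=
  forall t, 0 <= t <= 1 -> forall eps, 0 < eps -> exists delta, 0 < delta /\
    forall t', 0 <= t' <= 1 -> Rabs (t' - t) < delta -> vdist (p t') (p t) < eps.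

(* partitions 0 = t_0 <= t_1 <= ... <= t_m = 1, as the list t_1 ... t_m *)
Fixpoint chain_ok (a : R) (l : list R) : Prop :=
  match l with nil => a = 1 | cons b l' => a <= b /\ chain_ok b l' end.
Definition partition (l : list R) : Prop := chain_ok 0 l.
Fixpoint chord_sum {n} (p : R -> vec n) (a : R) (l : list R) : R :=
  match l with nil => 0 | cons b l' => vdist (p a) (p b) + chord_sum p b l' end.

(* len(p) >= c, where len(p) = sup of inscribed polygon lengths in [0, +oo] *)
Definition length_ge {n} (p : R -> vec n) (c : R) : Prop :=
  forall M, (forall l, partition l -> chord_sum p 0 l <= M) -> c <= M.

(* The linear parts B_g of the elements of G commute, because G is abelian, and fix V
   pointwise, because G translates V. Complexified, this commuting family has a common
   eigenvector w orthogonal to V (fundamental theorem of algebra), so the real plane P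
   spanned by Re w and Im w is orthogonal to V and invariant under every B_g. Since
   dim V^perp >= 3, take u2 <> 0 in P and u1 <> 0 orthogonal to both V and P.
   The endpoint a of the path on L1 and the endpoint g(t u2) = g(0) + B_g(t u2) on G L2
   then decompose into mutually orthogonal pieces a, B_g(t u2) in P and g(0) in V; the
   norms of the first two are the distances of the endpoints to V, hence at least s, and
   Pythagoras bounds the chord, hence the length, below by sqrt 2 s. *)

From Pilot Require Import Defs.
From Stdlib Require Import Reals Classical Lra FunctionalExtensionality.
From mathcomp Require Import all_boot all_order all_algebra.
From mathcomp Require Import Rstruct complex zify.
Import GRing.Theory.

Set Implicit Arguments.
Unset Strict Implicit.

Section CommonEigenvector.
Local Open Scope ring_scope.

Lemma finite_spanning_subseq (K : fieldType) (vT : vectType K) (F : vT -> Prop) :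
  exists2 s : seq vT, (forall v, v \in s -> F v) & (forall v, F v -> v \in <<s>>%VS).
Proof.
suff grow m (s : seq vT) : (\dim {:vT} - \dim <<s>> < m)%N ->
    (forall v, v \in s -> F v) ->
    exists2 s' : seq vT, (forall v, v \in s' -> F v) & (forall v, F v -> v \in <<s'>>%VS).
  by apply: (grow (\dim {:vT}).+1 [::]) => //; rewrite ltnS leq_subr.
elim: m s => [|m IHm] s // lt_s sF.
have [spans | ] := classic (forall v, F v -> v \in <<s>>%VS); first by exists s.
case/not_all_ex_not => v /(imply_to_and (F v)) [Fv /negP s'v].
apply: (IHm (v :: s)); last by move=> w; rewrite inE => /predU1P [-> | /sF].
have sub_s : (<<s>> <= <<v :: s>>)%VS by apply: sub_span => w sw; rewrite inE sw orbT.
have lt_dim : (\dim <<s>> < \dim <<v :: s>>)%N.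
  rewrite ltn_neqAle (dimv_leqif_eq sub_s) dimvS // andbT.
  by apply: contraNneq s'v => ->; rewrite memv_span ?mem_head.
have := dimvS (subvf <<v :: s>>); lia.
Qed.

Variable R : rcfType.

Local Notation MtoC := (map_mx (real_complex R)).
Local Notation mxRe := (map_mx (@complex.Re R)).
Local Notation mxIm := (map_mx (@complex.Im R)).

Lemma mxRe_mul_real p q r (w : 'M[R[i]]_(p, q)) (M : 'M[R]_(q, r)) :
  mxRe (w *m MtoC M) = mxRe w *m M.
Proof.
apply/matrixP => i j; rewrite !mxE.
rewrite (big_morph (@complex.Re R) (id1 := 0) (op1 := +%R)) //; last by case=> ? ? [].
by apply: eq_bigr => l _; rewrite !mxE; case: (w i l) => a b /=; rewrite mulr0 subr0.
Qed.

Lemma mxIm_mul_real p q r (w : 'M[R[i]]_(p, q)) (M : 'M[R]_(q, r)) :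
  mxIm (w *m MtoC M) = mxIm w *m M.
Proof.
apply/matrixP => i j; rewrite !mxE.
rewrite (big_morph (@complex.Im R) (id1 := 0) (op1 := +%R)) //; last by case=> ? ? [].
by apply: eq_bigr => l _; rewrite !mxE; case: (w i l) => a b /=; rewrite mulr0 add0r.
Qed.

Lemma mxReIm_eq0 p q (w : 'M[R[i]]_(p, q)) : mxRe w = 0 -> mxIm w = 0 -> w = 0.
Proof.
move=> /matrixP Re0 /matrixP Im0; apply/matrixP => i j.
by move: (Re0 i j) (Im0 i j); rewrite !mxE; case: (w i j) => a b /= -> ->.
Qed.

Lemma common_eigenvector_in_kernel n k (Bv : 'M[R]_(n, k)) (s : seq 'M[R]_n) :
  (k < n)%N -> {in s, forall M, M *m Bv = Bv} -> {in s &, forall M N, M *m N = N *m M} ->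
  exists w : 'rV[R[i]]_n, [/\ w != 0, w *m MtoC Bv = 0 &
    forall M, M \in s -> exists a, w *m MtoC M = a *: w].
Proof.
move=> lt_kn sBv s_comm; pose s1 := 1%:M :: s.
have sub_s1 : {subset s <= s1} by move=> M sM; rewrite inE sM orbT.
have s1Bv M : M \in s1 -> M *m Bv = Bv.
  by rewrite inE => /predU1P [-> | /sBv //]; rewrite mul1mx.
have s1_comm : {in s1 &, forall M N, M *m N = N *m M}.
  move=> M N; rewrite !inE => /predU1P [-> | sM] /predU1P [-> | sN];
    rewrite ?mul1mx ?mulmx1 //; exact: s_comm.
pose W := kermx (MtoC Bv).
have W_stable M : M *m Bv = Bv -> stablemx W (MtoC M).
  by move=> MBv; rewrite sub_kermx -mulmxA -map_mxM MBv mulmx_ker.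
pose sf := [seq restrict W (MtoC M) | M <- s1].
have W_gt0 : (0 < \rank W)%N by rewrite mxrank_ker; have := rank_leq_col (MtoC Bv); lia.
have W_ndvd : ~~ (2 ^ n.+1 %| \rank (1%:M : 'M[R[i]]_(\rank W)))%N.
  rewrite mxrank1; apply/negP => /(dvdn_leq W_gt0).
  rewrite leqNgt (leq_ltn_trans (rank_leq_row W)) //.
  by rewrite (ltn_trans (ltn_expl n (isT : (1 < 2)%N))) // ltn_exp2l.
have sf_stable : {in sf, forall f, stablemx (1%:M : 'M[R[i]]_(\rank W)) f}.
  by move=> f _; rewrite submx1.
have sf_comm : {in sf &, forall f g, f *m g = g *m f}.
  move=> _ _ /mapP [M sM ->] /mapP [N sN ->].
  rewrite -!restrictM ?inE ?W_stable ?s1Bv //.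
  by rewrite -!map_mxM s1_comm.
(* [Lemma6], from Derksen's proof of the fundamental theorem of algebra: commuting complex
   matrices stabilizing a space whose dimension is not divisible by 2^(n+1) have a common
   eigenvector. We apply it to the restrictions to W, and prepend 1 to [s] because it
   only accepts nonempty lists. *)
have [v v_neq0 v_eigen] := @Lemma6 R n (size s) _ _ W_ndvd sf (size_map _ _) sf_stable sf_comm.
exists (v *m row_base W); split.
- by rewrite mul_mx_rowfree_eq0 ?row_base_free.
- apply/eqP; rewrite -sub_kermx -/W.
  by rewrite (submx_trans (submxMl _ _)) // eq_row_base.
move=> M sM; have [a va] := v_eigen _ (map_f (fun M => restrict W (MtoC M)) (sub_s1 _ sM)).
by exists a; apply/eigenspaceP; rewrite -eigenspace_restrict // W_stable ?s1Bv ?sub_s1.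
Qed.

Lemma mxReIm_eigen_orthogonal n (M : 'M[R]_n) (w : 'rV[R[i]]_n) (a : R[i]) (u : 'rV[R]_n) :
  w *m MtoC M = a *: w -> mxRe w *m u^T = 0 -> mxIm w *m u^T = 0 ->
  mxRe w *m M *m u^T = 0 /\ mxIm w *m M *m u^T = 0.
Proof.
move=> wM Re_u Im_u.
have wu : w *m MtoC u^T = 0 by apply: mxReIm_eq0; rewrite ?mxRe_mul_real ?mxIm_mul_real.
have wMu : w *m MtoC M *m MtoC u^T = 0 by rewrite wM -scalemxAl wu scaler0.
by rewrite -!mxRe_mul_real -!mxIm_mul_real wMu; split; apply/matrixP => i j; rewrite !mxE.
Qed.

Lemma invariant_orthogonal_directions n k (Bv : 'M[R]_(n, k)) (F : 'M[R]_n -> Prop) :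
  (k + 2 < n)%N -> (forall M, F M -> M *m Bv = Bv) ->
  (forall M N, F M -> F N -> M *m N = N *m M) ->
  exists u1 u2 : 'rV[R]_n, [/\ u1 != 0, u2 != 0, u1 *m Bv = 0, u2 *m Bv = 0 &
    forall M, F M -> u2 *m M *m u1^T = 0].
Proof.
move=> lt_kn FBv F_comm.
have [s sF F_span] := finite_spanning_subseq F.
have [|w [w_neq0 wBv w_eigen]] := @common_eigenvector_in_kernel n k Bv s _
  (fun M sM => FBv M (sF M sM)) (fun M N sM sN => F_comm M N (sF M sM) (sF N sN)).
  by lia.
pose x := mxRe w; pose y := mxIm w.
have xBv : x *m Bv = 0 by rewrite -mxRe_mul_real wBv; apply/matrixP => i j; rewrite !mxE.
have yBv : y *m Bv = 0 by rewrite -mxIm_mul_real wBv; apply/matrixP => i j; rewrite !mxE.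
pose T := row_mx Bv (row_mx x^T y^T).
pose u1 := nz_row (kermx T).
have u1_neq0 : u1 != 0.
  by rewrite nz_row_eq0 -mxrank_eq0 mxrank_ker; have := rank_leq_col T; lia.
have : u1 *m T = 0 by apply/eqP; rewrite -sub_kermx nz_row_sub.
rewrite !mul_mx_row => /eqP; rewrite !row_mx_eq0 => /and3P [/eqP u1Bv /eqP u1x /eqP u1y].
have xu1 : x *m u1^T = 0 by rewrite -[x]trmxK -trmx_mul u1x trmx0.
have yu1 : y *m u1^T = 0 by rewrite -[y]trmxK -trmx_mul u1y trmx0.
have ReIm_u1 M : M \in s -> x *m M *m u1^T = 0 /\ y *m M *m u1^T = 0.
  by move=> sM; have [a wM] := w_eigen M sM; apply: mxReIm_eigen_orthogonal wM xu1 yu1.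
have [u2 [u2_neq0 u2Bv u2s]] : exists u2 : 'rV_n,
    [/\ u2 != 0, u2 *m Bv = 0 & forall M, M \in s -> u2 *m M *m u1^T = 0].
  have [x0 | x_neq0] := eqVneq x 0.
    exists y; split=> // [|M /ReIm_u1 [] //].
    by apply: contraNneq w_neq0 => y0; apply/eqP/mxReIm_eq0.
  by exists x; split=> // M /ReIm_u1 [].
exists u1, u2; split=> // M /F_span /(@coord_span _ _ _ (in_tuple s)) ->.
rewrite mulmx_sumr mulmx_suml big1 // => i _.
by rewrite -scalemxAr -scalemxAl u2s ?mem_nth // scaler0.
Qed.

End CommonEigenvector.

Local Open Scope R_scope.

Section Euclidean.
Variable n : nat.
Implicit Types x y z : vec n.

Lemma dot_comm x y : dot x y = dot y x.
Proof. by apply: eq_bigr => i _; rewrite Rmult_comm. Qed.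

Lemma dot_subl x y z : dot (vsub x y) z = dot x z - dot y z.
Proof. by rewrite /dot; elim/big_rec3: _ => [|i r1 r2 r3 _ ->]; rewrite /vsub; ring. Qed.

Lemma dot_scalel c x y : dot (vscale c x) y = c * dot x y.
Proof. by rewrite /dot; elim/big_rec2: _ => [|i r1 r2 _ ->]; rewrite /vscale; ring. Qed.

Lemma dot_ge0 x : 0 <= dot x x.
Proof.
rewrite /dot; elim/big_rec: _ => [|i r _ r_ge0]; first exact: Rle_refl.
by have := Rle_0_sqr (x i); rewrite /Rsqr; lra.
Qed.

Lemma dot_vsub_vsub x y : dot (vsub x y) (vsub x y) = dot x x - 2 * dot x y + dot y y.
Proof. by rewrite !dot_subl !(dot_comm _ (vsub x y)) !dot_subl (dot_comm y x); ring. Qed.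

Lemma vadd0l x : vadd vzero x = x.
Proof. by apply: functional_extensionality => i; rewrite /vadd /vzero Rplus_0_l. Qed.

Lemma dot_lin_comb k (c : 'I_k -> R) (u : 'I_k -> vec n) x :
  dot x (fun i => \big[Rplus/0]_(a < k) (c a * u a i)) =
  \big[Rplus/0]_(a < k) (c a * dot x (u a)).
Proof.
rewrite /dot; under eq_bigr => i _ do rewrite big_distrr /=.
rewrite exchange_big /=; apply: eq_bigr => a _; rewrite big_distrr /=.
by apply: eq_bigr => i _; ring.
Qed.

Section Span.
Variables (V : vec n -> Prop) (k : nat) (u : 'I_k -> vec n).
Hypothesis V_span : forall x, V x <-> exists c : 'I_k -> R,
  x = (fun i => \big[Rplus/0]_(a < k) (c a * u a i)).

Lemma span_mem a : V (u a).
Proof.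
apply/V_span; exists (fun b => if b == a then 1 else 0).
apply: functional_extensionality => i; rewrite (bigD1 a) //= eqxx big1 => [|b /negbTE ->]; ring.
Qed.

Lemma orth_compl_span w : (forall a, dot w (u a) = 0) -> orth_compl V w.
Proof.
by move=> w_u v /V_span [c ->]; rewrite dot_lin_comb big1 // => a _; rewrite w_u Rmult_0_r.
Qed.

End Span.

Lemma orth_complZ (V : vec n -> Prop) c x : orth_compl V x -> orth_compl V (vscale c x).
Proof. by move=> x_orth v Vv; rewrite dot_scalel x_orth ?Rmult_0_r. Qed.

Lemma dist_to_set_orth (V : vec n -> Prop) c p : V c -> orth_compl V p ->
  dist_to_set_is V (vadd c p) (vnorm p).
Proof.
move=> Vc p_orth; split=> [_ [v [Vv ->]] | b b_le].
  rewrite /vdist /vnorm; apply: sqrt_le_1_alt.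
  have -> : vsub v (vadd c p) = vsub (vsub v c) p.
    by apply: functional_extensionality => i; rewrite /vsub /vadd; ring.
  have v_c_p : dot (vsub v c) p = 0.
    by rewrite dot_subl (dot_comm v) (dot_comm c) (p_orth _ Vv) (p_orth _ Vc); ring.
  by rewrite dot_vsub_vsub v_c_p; have := dot_ge0 (vsub v c); lra.
have -> : vnorm p = vdist c (vadd c p).
  rewrite /vdist; have -> : vsub c (vadd c p) = vscale (-1) p.
    by apply: functional_extensionality => i; rewrite /vsub /vadd /vscale; ring.
  by rewrite /vnorm dot_scalel dot_comm dot_scalel; congr sqrt; ring.
by apply: b_le; exists c.
Qed.

Lemma sqrt2_le_vdist_orth (V : vec n -> Prop) a c p s : V c ->
  orth_compl V a -> orth_compl V p -> dot a p = 0 ->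
  0 <= s -> s <= vnorm a -> s <= vnorm p -> sqrt 2 * s <= vdist a (vadd c p).
Proof.
move=> Vc a_orth p_orth ap s_ge0 s_a s_p.
have sq_le x : s <= vnorm x -> s * s <= dot x x.
  move=> s_x; rewrite -(sqrt_sqrt (dot x x)); last exact: dot_ge0.
  by apply: Rmult_le_compat.
rewrite /vdist; have -> : vsub a (vadd c p) = vsub (vsub a p) c.
  by apply: functional_extensionality => i; rewrite /vsub /vadd; ring.
rewrite /vnorm dot_vsub_vsub (dot_subl a p c) (a_orth _ Vc) (p_orth _ Vc) dot_vsub_vsub ap.
rewrite -(sqrt_square s) // -sqrt_mult; [|lra | exact: Rmult_le_pos].
apply: sqrt_le_1_alt.
by have := sq_le _ s_a; have := sq_le _ s_p; have := dot_ge0 c; lra.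
Qed.

Lemma length_ge_vdist (p : R -> vec n) c : c <= vdist (p 0) (p 1) -> length_ge p c.
Proof.
move=> c_le M M_ub; apply: Rle_trans c_le _.
by have := M_ub [:: 1] (conj (Rle_0_1) erefl); rewrite /= Rplus_0_r.
Qed.

Lemma length_ge_sqrt2_orth_ends (V : vec n -> Prop) (sigma : R -> vec n) a c p s :
  V vzero -> V c -> orth_compl V a -> orth_compl V p -> dot a p = 0 ->
  sigma 0 = a -> sigma 1 = vadd c p ->
  is_glb (fun r => exists t, 0 <= t <= 1 /\ dist_to_set_is V (sigma t) r) s -> 0 < s ->
  length_ge sigma (sqrt 2 * s).
Proof.
move=> V0 Vc a_orth p_orth ap sigma0 sigma1 [s_lb _] s_gt0.
have s_le t x d : 0 <= t <= 1 -> sigma t = x -> dist_to_set_is V x d -> s <= d.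
  by move=> t01 <- dist_x; apply: s_lb; exists t.
have chord : sqrt 2 * s <= vdist (sigma 0) (sigma 1).
  rewrite sigma1 {1}sigma0; apply: (sqrt2_le_vdist_orth Vc a_orth p_orth ap); first lra.
  - apply: (s_le 0 (vadd vzero a)); first lra; first by rewrite vadd0l.
    exact: (dist_to_set_orth V0 a_orth).
  - by apply: (s_le 1 _ _ _ sigma1 (dist_to_set_orth Vc p_orth)); lra.
exact (length_ge_vdist chord).
Qed.

End Euclidean.

Section Isometries.
Variable n : nat.
Implicit Types (g h : vec n -> vec n) (x : vec n).

Definition lin_apply g x : vec n := fun i => \big[Rplus/0]_(j < n) (lin_part g i j * x j).

Lemma sum_mul_ebasis (f : 'I_n -> R) j : \big[Rplus/0]_(l < n) (f l * ebasis j l) = f j.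
Proof.
rewrite (bigD1 j) //= big1 => [|l /negbTE l_j]; rewrite /ebasis; last by rewrite l_j; ring.
by rewrite eqxx; ring.
Qed.

Lemma lin_part_affine g B b :
  (forall x, g x = (fun i => \big[Rplus/0]_(j < n) (B i j * x j) + b i)) -> lin_part g = B.
Proof.
move=> g_aff; apply: functional_extensionality => i; apply: functional_extensionality => j.
by rewrite /lin_part !g_aff sum_mul_ebasis big1 => [|l _]; rewrite /vzero; ring.
Qed.

Lemma isometry_affine g : is_isometry g -> forall x, g x = vadd (g vzero) (lin_apply g x).
Proof.
move=> [B [b [_ g_aff]]] x; apply: functional_extensionality => i.
rewrite /vadd /lin_apply (lin_part_affine g_aff) !g_aff [X in (X + _) + _]big1 => [|j _];
  rewrite /vzero; ring.
Qed.


Lemma lin_applyZ g c x : lin_apply g (vscale c x) = vscale c (lin_apply g x).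
Proof.
apply: functional_extensionality => i; rewrite /lin_apply /vscale big_distrr /=.
by apply: eq_bigr => j _; ring.
Qed.

(* Qualified: mathcomp's [orthogonal] shadows the one of Defs. *)
Lemma lin_part_orthogonal g : is_isometry g -> Defs.orthogonal (lin_part g).
Proof. by move=> [B [b [B_orth g_aff]]]; rewrite (lin_part_affine g_aff). Qed.

Lemma lin_apply_sub g x y : lin_apply g (vsub x y) = vsub (lin_apply g x) (lin_apply g y).
Proof.
apply: functional_extensionality => i; rewrite /lin_apply /vsub.
by elim/big_rec3: _ => [|j r1 r2 r3 _ ->]; ring.
Qed.

Lemma lin_part_comp g h : is_isometry g ->
  forall i j, lin_part (fun x => g (h x)) i j =
              \big[Rplus/0]_(l < n) (lin_part g i l * lin_part h l j).
Proof.
move=> g_iso i j.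
have -> : lin_part (fun x => g (h x)) i j =
          vsub (lin_apply g (h (ebasis j))) (lin_apply g (h vzero)) i.
  rewrite /lin_part (isometry_affine g_iso (h (ebasis j))).
  by rewrite (isometry_affine g_iso (h vzero)) /vadd /vsub; ring.
by rewrite -lin_apply_sub.
Qed.

Lemma lin_apply_translation (V : vec n -> Prop) g t v : is_isometry g -> V vzero ->
  (forall x, V x -> g x = vadd x t) -> V v -> lin_apply g v = v.
Proof.
move=> g_iso V0 g_transl Vv; have := isometry_affine g_iso v.
rewrite !g_transl // => /(f_equal (fun f => f _)) g_v.
by apply: functional_extensionality => i; have := g_v i; rewrite /vadd /vzero; lra.
Qed.

End Isometries.

Section MatrixForm.
Local Open Scope ring_scope.
Variables n k : nat.
Implicit Types (g h : vec n -> vec n) (x y : vec n).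

Definition rowv x : 'rV[R]_n := \row_i x i.
Definition lin_mx g : 'M[R]_n := \matrix_(i, j) lin_part g i j.
Definition basis_mx (u : 'I_k -> vec n) : 'M[R]_(n, k) := \matrix_(i, a) u a i.

Lemma rowvK (m : 'rV[R]_n) : rowv (fun i => m ord0 i) = m.
Proof. by apply/rowP => i; rewrite mxE. Qed.

Lemma row_neq0_vzero (m : 'rV[R]_n) : m != 0 -> (fun i => m ord0 i) <> vzero.
Proof.
move=> m_neq0 m0; move: m_neq0; rewrite -(rowvK m) m0.
by apply/negP/negPn/eqP/rowP => i; rewrite !mxE.
Qed.

Lemma dot_rowv x y : dot x y = (rowv x *m (rowv y)^T) ord0 ord0.
Proof. by rewrite mxE; apply: eq_bigr => i _; rewrite !mxE. Qed.

Lemma rowv_mul_basis_mx x (u : 'I_k -> vec n) a : (rowv x *m basis_mx u) ord0 a = dot x (u a).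
Proof. by rewrite mxE; apply: eq_bigr => i _; rewrite !mxE. Qed.

Lemma rowv_mul_tr_lin_mx g x : rowv x *m (lin_mx g)^T = rowv (lin_apply g x).
Proof.
apply/rowP => i; rewrite !mxE; apply: eq_bigr => j _.
by rewrite !mxE; apply: mulrC.
Qed.

Lemma lin_mx_comp g h : is_isometry g -> lin_mx (fun x => g (h x)) = lin_mx g *m lin_mx h.
Proof.
move=> g_iso; apply/matrixP => i j; rewrite !mxE lin_part_comp //.
by apply: eq_bigr => l _; rewrite !mxE.
Qed.

Lemma tr_lin_mx_mul g : is_isometry g -> (lin_mx g)^T *m lin_mx g = 1%:M.
Proof.
move=> /lin_part_orthogonal g_orth; apply/matrixP => i j; rewrite !mxE.
transitivity (\big[Rplus/0]_(l < n) (lin_part g l i * lin_part g l j)).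
  by apply: eq_bigr => l _; rewrite !mxE.
by rewrite g_orth; case: (i == j).
Qed.

Lemma lin_mx_mul_basis_mx g (u : 'I_k -> vec n) :
  (forall a, lin_apply g (u a) = u a) -> lin_mx g *m basis_mx u = basis_mx u.
Proof.
move=> u_fixed; apply/matrixP => i a.
transitivity (lin_apply g (u a) i); last by rewrite u_fixed mxE.
by rewrite mxE; apply: eq_bigr => j _; rewrite !mxE.
Qed.

Lemma commuting_isometries_orthogonal_directions (G : (vec n -> vec n) -> Prop)
    (u : 'I_k -> vec n) :
  (forall g, G g -> is_isometry g) -> abelian G ->
  (forall g, G g -> forall a, lin_apply g (u a) = u a) -> (k + 2 < n)%N ->
  exists u1 u2 : vec n, [/\ u1 <> vzero, u2 <> vzero,
    forall a, dot u1 (u a) = 0, forall a, dot u2 (u a) = 0 &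
    forall g, G g -> (forall a, dot (lin_apply g u2) (u a) = 0) /\ dot (lin_apply g u2) u1 = 0].
Proof.
move=> G_iso G_ab G_fix lt_kn.
pose F M := exists2 g, G g & M = (lin_mx g)^T.
have FBv M : F M -> M *m basis_mx u = basis_mx u.
  move=> [g Gg ->]; rewrite -{1}(lin_mx_mul_basis_mx (G_fix g Gg)) mulmxA.
  by rewrite tr_lin_mx_mul ?mul1mx //; apply: G_iso.
have F_comm M N : F M -> F N -> M *m N = N *m M.
  move=> [g Gg ->] [h Gh ->].
  rewrite -!trmx_mul -(lin_mx_comp _ (G_iso g Gg)) -(lin_mx_comp _ (G_iso h Gh)).
  by congr (_^T); congr lin_mx; apply: functional_extensionality; apply: G_ab.
have [m1 [m2 [m1_neq0 m2_neq0 m1B m2B m2Mm1]]] :=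
  invariant_orthogonal_directions lt_kn FBv F_comm.
have rowv_mul_tr_lin_mx_basis g : G g ->
    rowv (lin_apply g (fun i => m2 ord0 i)) *m basis_mx u = 0.
  by move=> Gg; rewrite -rowv_mul_tr_lin_mx rowvK -mulmxA FBv ?m2B //; exists g.
exists (fun i => m1 ord0 i), (fun i => m2 ord0 i); split; try exact: row_neq0_vzero.
- by move=> a; rewrite -rowv_mul_basis_mx rowvK m1B mxE.
- by move=> a; rewrite -rowv_mul_basis_mx rowvK m2B mxE.
move=> g Gg; split=> [a|].
  by rewrite -rowv_mul_basis_mx rowv_mul_tr_lin_mx_basis // mxE.
rewrite dot_rowv -rowv_mul_tr_lin_mx !rowvK m2Mm1 ?mxE //.
by exists g.
Qed.

End MatrixForm.

Theorem mainTheorem20 (n : nat) (Gamma G : (vec n -> vec n) -> Prop)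
    (V : vec n -> Prop) (k : nat) :
  is_subgroup_En Gamma -> discrete_En Gamma ->
  subgroup_of G Gamma -> finite_index G Gamma ->
  cocompact_translation_pair G V ->
  abelian G -> linear_subspace V ->
  has_dim V k -> (k + 2 < n)%nat ->
  exists u1 u2 : vec n,
    u1 <> vzero /\ u2 <> vzero /\ orth_compl V u1 /\ orth_compl V u2 /\
    forall (sigma : R -> vec n) (s : R),
      continuous_path sigma ->
      half_line u1 (sigma 0) ->
      (exists g y, G g /\ half_line u2 y /\ sigma 1 = g y) ->
      is_glb (fun r => exists t, 0 <= t <= 1 /\ dist_to_set_is V (sigma t) r) s ->
      0 < s ->
      length_ge sigma (sqrt 2 * s).
Proof.
move=> _ _ [[G_iso _] _] _ [G_transl _] G_ab [V0 _] [u [_ V_span]] lt_kn.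
have G_fix g : G g -> forall a, lin_apply g (u a) = u a.
  move=> Gg a; have [_ [_ [t g_transl]]] := G_transl g Gg.
  exact: lin_apply_translation (G_iso g Gg) V0 g_transl (span_mem V_span a).
have [u1 [u2 [u1_neq0 u2_neq0 u1_u u2_u G_u2]]] :=
  commuting_isometries_orthogonal_directions G_iso G_ab G_fix lt_kn.
have u1_orth := orth_compl_span V_span u1_u.
exists u1, u2; do 3 (split=> //); split; first exact: (orth_compl_span V_span u2_u).
move=> sigma s _ [t1 [_ sigma0]] [g [_ [Gg [[t2 [_ ->]] sigma1]]]].
have [gu2_orth gu2_u1] := G_u2 g Gg.
apply: (length_ge_sqrt2_orth_ends V0 ((G_transl g Gg).1 _ V0) (orth_complZ t1 u1_orth)
                                  (orth_complZ t2 (orth_compl_span V_span gu2_orth))) => //.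
- by rewrite dot_scalel dot_comm dot_scalel gu2_u1 !Rmult_0_r.
- by rewrite sigma1 (isometry_affine (G_iso g Gg)) lin_applyZ.
Qed.
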